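(* Let $k\ge 2$ and $n\ge 2k$ be integers. The Kneser graph $\mathrm{KG}(n,k)$ satisfies $\alpha_{\mathrm{od}}(\mathrm{KG}(n,k))=\alpha(\mathrm{KG}(n,k))$ if and only if $\binom{n-k-1}{k-1}$ is odd. Equivalently, $\alpha_{\mathrm{od}}(\mathrm{KG}(n,k))=\alpha(\mathrm{KG}(n,k))$ if and only if $\binom{n-1}{k-1}\not\equiv \sum_{t=1}^{k}\binom{k}{t}\binom{n-k-1}{k-1-t} \pmod 2$.
   Context: The Kneser graph $\mathrm{KG}(n,k)$ has as vertices the $k$-element subsets of an $n$-element set, two being adjacent iff they are disjoint. An odd independent set in a graph $G=(V,E)$ is an independent set $S$ such that every $v\in V\setminus S$ has either no neighbor or an odd number of neighbors in $S$. $\alpha_{\mathrm{od}}(G)$ is the maximum size of an odd independent set; $\alpha(G)$ is the independence number. *)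

From mathcomp Require Import all_boot.
Set Implicit Arguments. Unset Strict Implicit. Unset Printing Implicit Defensive.

Section Graphs.
Variables (V : finType) (adj : rel V).

Definition independent (S : {set V}) : bool :=
  [forall x in S, forall y in S, ~~ adj x y].

Definition odd_independent (S : {set V}) : bool :=
  independent S &&
  [forall v in ~: S,
     (#|[set u in S | adj v u]| == 0) || odd #|[set u in S | adj v u]|].

Definition alpha : nat := \max_(S : {set V} | independent S) #|S|.
Definition alpha_od : nat := \max_(S : {set V} | odd_independent S) #|S|.
End Graphs.

Definition KGV (n k : nat) := {A : {set 'I_n} | #|A| == k}.
Definition KGadj (n k : nat) : rel (KGV n k) :=
  fun A B => [disjoint val A & val B].

(* The independence number of KG(n,k) is C(n-1,k-1) by the Erdős–Ko–Rado
   theorem, proved with Katona's cycle count: a cyclic order of [n] contains at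
   most k pairwise meeting arcs of length k, and averaging over all relabellings
   of the cycle bounds every intersecting family.  For n > 2k, equality forces
   each relabelling to hit exactly k arcs; this makes an extremal family closed
   under exchanges (of y1 |: A :\ x1 and y2 |: A :\ x2 one stays in the family),
   and an exchange-closed intersecting family is a star.  Hence alpha_od = alpha
   iff a star is odd independent.  In the star at c every vertex avoiding c has
   exactly C(n-k-1,k-1) neighbours, and for n = 2k this binomial is 1.  The
   second form of the statement is Vandermonde's identity modulo 2. *)

From mathcomp Require Import all_boot all_fingroup zify.
Set Implicit Arguments. Unset Strict Implicit. Unset Printing Implicit Defensive.

Lemma card_leq_size_in (T : finType) (U : eqType) (A : {set T}) (f : T -> U)
    (s : seq U) :
  {in A &, injective f} -> {in A, forall t, f t \in s} -> #|A| <= size s.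
Proof.
move=> f_inj fA; rewrite cardE -(size_map f); apply: uniq_leq_size.
  by rewrite map_inj_in_uniq ?enum_uniq // => x y; rewrite !mem_enum; exact: f_inj.
by move=> u /mapP [x]; rewrite mem_enum => /fA fx ->.
Qed.

Section CyclicArcs.
Variable n : nat.
Implicit Types (s t a b i : 'I_n) (T : {set 'I_n}).

Definition cdist a b : nat := if a <= b then b - a else b + n - a.

Definition arc k t : {set 'I_n} := [set i | cdist t i < k].

Lemma cdist_ltn a b : cdist a b < n.
Proof.
by rewrite /cdist; have := ltn_ord a; have := ltn_ord b; case: (leqP a b); lia.
Qed.

Lemma cdist_inj s : injective (cdist s).
Proof.
move=> t1 t2; rewrite /cdist => e; apply: val_inj => /=; move: e.
have := ltn_ord s; have := ltn_ord t1; have := ltn_ord t2.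
by case: (leqP s t1); case: (leqP s t2); lia.
Qed.

Lemma cdist_sub s t1 t2 :
  cdist s t1 <= cdist s t2 -> cdist t1 t2 = cdist s t2 - cdist s t1.
Proof.
rewrite /cdist; have := ltn_ord s; have := ltn_ord t1; have := ltn_ord t2.
by case: (leqP s t1); case: (leqP s t2); case: (leqP t1 t2); lia.
Qed.

Lemma cdistnn s : cdist s s = 0.
Proof. by rewrite /cdist leqnn subnn. Qed.

Lemma exists_cdist s d : d < n -> exists t, cdist s t = d.
Proof.
move=> dn; have tn : (if s + d < n then s + d else s + d - n) < n.
  by have := ltn_ord s; case: ifP; lia.
exists (Ordinal tn); rewrite /cdist /=; have := ltn_ord s.
by case: ifP; case: leqP; lia.
Qed.

Lemma card_arc k t : k <= n -> #|arc k t| = k.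
Proof.
move=> kn; apply/eqP; rewrite eqn_leq; apply/andP; split.
  rewrite -[X in _ <= X](size_iota 0 k); apply: card_leq_size_in.
    by move=> ? ? _ _; apply: cdist_inj.
  by move=> i; rewrite !inE mem_iota.
have : #|~: arc k t| <= n - k.
  rewrite -(size_iota k (n - k)); apply: card_leq_size_in.
    by move=> ? ? _ _; apply: cdist_inj.
  by move=> i; rewrite !inE mem_iota -leqNgt => h; have := cdist_ltn t i; lia.
by have := cardsC (arc k t); rewrite card_ord; lia.
Qed.

Lemma arc_succ k s t e : 0 < k < n -> cdist s t = 1 -> cdist s e = k ->
  arc k t = e |: arc k s :\ s.
Proof.
move=> kn st se; apply/setP => i; rewrite !inE -!(inj_eq (@cdist_inj s)) se cdistnn.
move: st; rewrite /cdist; have := ltn_ord s; have := ltn_ord t; have := ltn_ord i.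
by case: (leqP s t); case: (leqP s i); case: (leqP t i); move=> *; apply/idP/idP; lia.
Qed.

Lemma arc_pred k s t e : 0 < k < n -> cdist s t = n.-1 -> cdist s e = k.-1 ->
  arc k t = t |: arc k s :\ e.
Proof.
move=> kn st se; apply/setP => i; rewrite !inE -!(inj_eq (@cdist_inj s)) se st.
move: st; rewrite /cdist; have := ltn_ord s; have := ltn_ord t; have := ltn_ord i.
by case: (leqP s t); case: (leqP s i); case: (leqP t i); move=> *; apply/idP/idP; lia.
Qed.

Lemma disjoint_arcs k t1 t2 :
  k <= cdist t1 t2 <= n - k -> [disjoint arc k t1 & arc k t2].
Proof.
move=> h; apply/pred0P => i /=; rewrite !inE; apply/negP => /andP [].
move: h; rewrite /cdist; have := ltn_ord t1; have := ltn_ord t2; have := ltn_ord i.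
by case: (leqP t1 t2); case: (leqP t1 i); case: (leqP t2 i); lia.
Qed.

Lemma meeting_arcs_cdist k s t :
  ~~ [disjoint arc k s & arc k t] -> cdist s t < k \/ n - k < cdist s t.
Proof.
move=> meet; have [lt|ge] := ltnP (cdist s t) k; [by left | right].
by rewrite ltnNge; apply: contra meet => le; apply: disjoint_arcs; rewrite ge le.
Qed.

Lemma meeting_arcs_cdist_neq k m s t1 t2 : k <= m <= n - k ->
  ~~ [disjoint arc k t1 & arc k t2] -> cdist s t2 != cdist s t1 + m.
Proof.
move=> hm; apply: contraNneq => e; apply: disjoint_arcs.
by rewrite (@cdist_sub s) e; lia.
Qed.

Definition pairwise_meeting k T :=
  {in T &, forall t1 t2, ~~ [disjoint arc k t1 & arc k t2]}.

(* Seen from an arc s of a pairwise meeting family, the other arcs start at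
   distances in [0, k) or (n - k, n); folding modulo m maps them injectively,
   since two meeting arcs are never m apart. *)
Definition fold_cdist m s t := if cdist s t < m then cdist s t else cdist s t - m.

Lemma pairwise_meeting_fold_inj k m s T : k <= m <= n - k ->
  pairwise_meeting k T -> {in T, forall t, cdist s t < m + m} ->
  {in T &, injective (fold_cdist m s)}.
Proof.
move=> hm meetT lt2m t1 t2 t1T t2T; rewrite /fold_cdist => e; apply: (@cdist_inj s).
have := meeting_arcs_cdist_neq s hm (meetT _ _ t1T t2T).
have := meeting_arcs_cdist_neq s hm (meetT _ _ t2T t1T).
have := lt2m _ t1T; have := lt2m _ t2T.
by move: e; case: (ltnP (cdist s t1) m); case: (ltnP (cdist s t2) m); lia.
Qed.

Lemma card_pairwise_meeting k T :
  k + k <= n -> pairwise_meeting k T -> #|T| <= k.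
Proof.
move=> kn meetT; have [->|[s sT]] := set_0Vmem T; first by rewrite cards0.
have near t : t \in T -> cdist s t < k \/ n - k < cdist s t.
  by move=> tT; apply: meeting_arcs_cdist; apply: meetT.
rewrite -(size_iota 0 k); apply: card_leq_size_in (fold_cdist (n - k) s) _ _ _.
  apply: (pairwise_meeting_fold_inj _ meetT) => [|t tT]; first lia.
  by have := cdist_ltn s t; lia.
move=> t tT; rewrite mem_iota /fold_cdist.
by have := near t tT; have := cdist_ltn s t; case: (ltnP (cdist s t) (n - k)); lia.
Qed.

Lemma card_pairwise_meeting_gap k T s :
  1 < k -> k + k < n -> pairwise_meeting k T -> s \in T ->
  {in T, forall t, cdist s t \notin [:: 1; n.-1]} -> #|T| <= k.-1.
Proof.
move=> k1 kn meetT sT gapT.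
have near t : t \in T -> cdist s t < k \/ n - k < cdist s t.
  by move=> tT; apply: meeting_arcs_cdist; apply: meetT.
have gap t : t \in T -> cdist s t != 1 /\ cdist s t != n.-1.
  by move=> /gapT; rewrite !inE negb_or => /andP.
have -> : k.-1 = size (0 :: iota 2 (k - 2)) by rewrite /= size_iota; lia.
apply: card_leq_size_in (fold_cdist (n - k - 1) s) _ _ _.
  apply: (pairwise_meeting_fold_inj _ meetT) => [|t tT]; first lia.
  by have := cdist_ltn s t; have := near t tT; have := gap t tT; lia.
move=> t tT; rewrite inE mem_iota /fold_cdist.
have := near t tT; have := gap t tT; have := cdist_ltn s t.
by case: (ltnP (cdist s t) (n - k - 1)); lia.
Qed.

End CyclicArcs.

Section PermutedSets.
Variable T : finType.
Implicit Types (W X Y A B : {set T}) (p q : {perm T}) (x y z : T).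

Lemma perm_imsetM p q X : (p * q)%g @: X = q @: (p @: X).
Proof. by rewrite -imset_comp; apply: eq_imset => z; rewrite permM. Qed.

Lemma disjoint_perm_imset p X Y : [disjoint p @: X & p @: Y] = [disjoint X & Y].
Proof.
by rewrite -!setI_eq0 -imsetI ?imset_eq0 // => x y _ _; apply: perm_inj.
Qed.

Lemma perm_imset_exchange p A x y : p @: (y |: A :\ x) = p y |: p @: A :\ p x.
Proof.
rewrite imsetU1; congr (_ |: _); apply/setP => z; rewrite !inE.
apply/imsetP/andP => [[w] | [zx /imsetP [w wA zw]]].
  rewrite !inE => /andP [wx wA] ->; split; last exact: imset_f.
  by apply: contra wx => /eqP /perm_inj ->.
by exists w; rewrite // !inE wA andbT; apply: contra zx => /eqP wx; rewrite zw wx.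
Qed.

Lemma tperm_imset_id X x y : (x \in X) = (y \in X) -> tperm x y @: X = X.
Proof.
move=> xy; apply/eqP; rewrite eqEcard card_imset ?leqnn ?andbT; last exact: perm_inj.
apply/subsetP => _ /imsetP [z zX ->].
case: tpermP => [zx | zy | _ _ //]; first by rewrite -xy -zx.
by rewrite xy -zy.
Qed.

Lemma tperm_imset_exchange X x y :
  x \in X -> y \notin X -> tperm x y @: X = y |: X :\ x.
Proof.
move=> xX yX; apply/setP => z; rewrite !inE; apply/imsetP/idP => [[w wX ->] | ].
  case: tpermP => [_ | wy | /eqP wx /eqP wy]; first by rewrite eqxx.
    by move: yX; rewrite -wy wX.
  by rewrite wX wx orbT.
case/orP => [/eqP -> | /andP [zx zX]]; first by exists x; rewrite ?tpermL.
exists z; rewrite // tpermD // eq_sym //.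
by apply: contraNneq yX => <-.
Qed.

Lemma exists_perm_imset X Y : #|X| = #|Y| -> exists p, p @: X = Y.
Proof.
move: {2}#|X :\: Y| (erefl #|X :\: Y|) => m; elim: m X => [|m IHm] X dXY cXY.
  exists 1%g; rewrite imset_perm1; apply/eqP; rewrite eqEcard cXY leqnn andbT.
  by rewrite -setD_eq0 -cards_eq0 dXY.
have [x] : exists x, x \in X :\: Y by apply/card_gt0P; rewrite dXY.
rewrite inE => /andP [xY xX].
have [y] : exists y, y \in Y :\: X.
  by apply/card_gt0P; rewrite cardsD setIC -cXY -cardsD dXY.
rewrite inE => /andP [yX yY].
have dX'Y : #|(y |: X :\ x) :\: Y| = m.
  suff -> : (y |: X :\ x) :\: Y = (X :\: Y) :\ x.
    by apply/eqP; rewrite -eqSS -dXY (cardsD1 x (X :\: Y)) !inE xY xX.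
  apply/setP => z; rewrite !inE; case: (z =P y) => [-> | _] /=.
    by rewrite yY andbF.
  by case: (z \in Y); case: (z != x).
have cX'Y : #|tperm x y @: X| = #|Y| by rewrite card_imset //; apply: perm_inj.
rewrite -(tperm_imset_exchange xX yX) in dX'Y.
have [q qY] := IHm _ dX'Y cX'Y.
by exists (tperm x y * q)%g; rewrite perm_imsetM.
Qed.

Lemma perm_imset_fix p X A x y : p @: X = A -> (x \in X) = (y \in A) ->
  exists p', [/\ p' x = y, p' @: X = A & forall z, z != x -> p z != y -> p' z = p z].
Proof.
move=> pX xy; exists (p * tperm (p x) y)%g; split.
- by rewrite permM tpermL.
- by rewrite perm_imsetM pX tperm_imset_id // -xy -pX mem_imset //; apply: perm_inj.
move=> z zx pzy; rewrite permM tpermD // eq_sym //.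
by apply: contra zx => /eqP /perm_inj ->.
Qed.

Lemma exists_perm_imset_at X A a1 a2 b1 b2 x1 x2 y1 y2 : #|X| = #|A| ->
  a1 \in X -> a2 \in X -> a1 != a2 -> b1 \notin X -> b2 \notin X -> b1 != b2 ->
  x1 \in A -> x2 \in A -> x1 != x2 -> y1 \notin A -> y2 \notin A -> y1 != y2 ->
  exists p, [/\ p @: X = A, p a1 = x1, p a2 = x2, p b1 = y1 & p b2 = y2].
Proof.
move=> cXA a1X a2X a12 b1X b2X b12 x1A x2A x12 y1A y2A y12.
have neq (C : {set T}) u v : u \in C -> v \notin C -> u != v.
  by move=> uC; apply: contraNneq => <-.
have [a1b1 a1b2 a2b1 a2b2] : [/\ a1 != b1, a1 != b2, a2 != b1 & a2 != b2].
  by split; apply: (neq X).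
have [x1y1 x1y2 x2y1 x2y2] : [/\ x1 != y1, x1 != y2, x2 != y1 & x2 != y2].
  by split; apply: (neq A).
have [p0 p0X] := exists_perm_imset cXA.
have [p1 [p1a1 p1X _]] := perm_imset_fix p0X (etrans a1X (esym x1A)).
have [p2 [p2a2 p2X p2E]] := perm_imset_fix p1X (etrans a2X (esym x2A)).
have [p3 [p3b1 p3X p3E]] :=
  perm_imset_fix p2X (etrans (negbTE b1X) (esym (negbTE y1A))).
have [p4 [p4b2 p4X p4E]] :=
  perm_imset_fix p3X (etrans (negbTE b2X) (esym (negbTE y2A))).
have p2a1 : p2 a1 = x1 by rewrite p2E; rewrite ?p1a1.
have p3a1 : p3 a1 = x1 by rewrite p3E; rewrite ?p2a1.
have p3a2 : p3 a2 = x2 by rewrite p3E; rewrite ?p2a2.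
by exists p4; split; rewrite // p4E; rewrite ?p3a1 ?p3a2 ?p3b1 // eq_sym.
Qed.

Definition nperm_onto X A := #|[set p : {perm T} | p @: X == A]|.

Lemma nperm_onto_card X Y A B :
  #|X| = #|Y| -> #|A| = #|B| -> nperm_onto X A = nperm_onto Y B.
Proof.
suff le X1 X2 A1 A2 : #|X1| = #|X2| -> #|A1| = #|A2| ->
    nperm_onto X1 A1 <= nperm_onto X2 A2.
  by move=> cX cA; apply/eqP; rewrite eqn_leq !le.
move=> cX cA; have [r rX] := exists_perm_imset (esym cX).
have [s sA] := exists_perm_imset cA.
rewrite /nperm_onto -(card_imset _ (f := fun p => (r * p * s)%g)); last first.
  by move=> p q /mulIg /mulgI.
apply/subset_leq_card/subsetP => q /imsetP [p]; rewrite !inE => /eqP pX ->.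
by rewrite !perm_imsetM rX pX sA.
Qed.

Lemma card_perm_imset_in W (F : {set {set T}}) :
  #|[set p : {perm T} | p @: W \in F]| = \sum_(A in F) nperm_onto W A.
Proof.
rewrite -sum1_card (partition_big (fun p => p @: W) (fun A => A \in F)) => [|p];
  last by rewrite inE.
apply: eq_bigr => A AF; rewrite /nperm_onto -sum1_card; apply: eq_bigl => p.
by rewrite !inE; case: (p @: W =P A) => [-> | _]; rewrite ?andbT ?andbF.
Qed.

Lemma card_perm_nperm_onto W : #|{perm T}| = 'C(#|T|, #|W|) * nperm_onto W W.
Proof.
transitivity #|[set p : {perm T} | p @: W \in [set A : {set T} | #|A| == #|W|]]|.
  by apply: eq_card => p; rewrite !inE card_imset ?eqxx //; exact: perm_inj.
rewrite card_perm_imset_in -card_draws -sum_nat_const.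
by apply: eq_bigr => A; rewrite inE => /eqP cA; apply: nperm_onto_card.
Qed.

End PermutedSets.

Definition intersecting (T : finType) (F : {set {set T}}) :=
  {in F &, forall A B : {set T}, ~~ [disjoint A & B]}.

Definition uniform (T : finType) k (F : {set {set T}}) :=
  {in F, forall A : {set T}, #|A| = k}.

Definition exchange_closed (T : finType) (F : {set {set T}}) :=
  forall A x1 x2 y1 y2, A \in F -> x1 \in A -> x2 \in A -> x1 != x2 ->
    y1 \notin A -> y2 \notin A -> y1 != y2 ->
  y1 |: A :\ x1 \in F \/ y2 |: A :\ x2 \in F.

Section KatonaCycle.
Variables (n k : nat).
Implicit Types (F : {set {set 'I_n}}) (p : {perm 'I_n}).

(* p stands for the cyclic order p 0, p 1, ..., p (n - 1) of Katona's argument. *)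
Definition hits p F := [set t : 'I_n | p @: arc k t \in F].

Lemma pairwise_meeting_hits p F : intersecting F -> pairwise_meeting k (hits p F).
Proof.
move=> iF t1 t2; rewrite !inE => h1 h2.
by rewrite -(disjoint_perm_imset p); apply: iF.
Qed.

Lemma sum_card_hits F (t0 : 'I_n) : k <= n -> uniform k F ->
  \sum_p #|hits p F| = n * (#|F| * nperm_onto (arc k t0) (arc k t0)).
Proof.
move=> kn kF.
transitivity (\sum_(t : 'I_n) #|[set p : {perm 'I_n} | p @: arc k t \in F]|).
  under eq_bigr => p _ do rewrite -sum1_card big_mkcond /=.
  rewrite exchange_big; refine (eq_bigr _ (fun t _ => _)).
  rewrite -sum1_card [RHS]big_mkcond; refine (eq_bigr _ (fun p _ => _)).
  by rewrite !inE.
rewrite (eq_bigr (fun=> #|F| * nperm_onto (arc k t0) (arc k t0))) => [|t _].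
  by rewrite sum_nat_const card_ord.
rewrite card_perm_imset_in -sum_nat_const; apply: eq_bigr => A AF.
by apply: nperm_onto_card; rewrite ?card_arc ?kF.
Qed.

Lemma binom_sum_card_hits F : 0 < k -> k <= n -> uniform k F ->
  'C(n.-1, k.-1) * \sum_p #|hits p F| = #|F| * (k * n`!).
Proof.
move=> k0 kn kF; have n0 : 0 < n by lia.
set W := arc k (Ordinal n0).
have fact_n : n`! = 'C(n, k) * nperm_onto W W.
  by rewrite -card_Sn (card_perm_nperm_onto W) card_ord card_arc.
have bin_n : n * 'C(n.-1, k.-1) = k * 'C(n, k) by rewrite mul_bin_diag prednK.
rewrite (sum_card_hits (Ordinal n0)) // fact_n mulnA (mulnC 'C(_, _)) bin_n.
by rewrite mulnCA -mulnA.
Qed.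

Lemma EKR F : 0 < k -> k + k <= n -> intersecting F -> uniform k F ->
  #|F| <= 'C(n.-1, k.-1).
Proof.
move=> k0 kn iF kF; have kn' : k <= n by lia.
have sum_le : \sum_p #|hits p F| <= k * n`!.
  rewrite -card_Sn mulnC -sum_nat_const; apply: leq_sum => p _.
  exact/card_pairwise_meeting/pairwise_meeting_hits.
rewrite -(leq_pmul2r (_ : 0 < k * n`!)) ?muln_gt0 ?k0 ?fact_gt0 //.
by rewrite -binom_sum_card_hits // leq_mul2l sum_le orbT.
Qed.

Lemma EKR_extremal_card_hits F p : 0 < k -> k + k <= n ->
  intersecting F -> uniform k F -> #|F| = 'C(n.-1, k.-1) -> #|hits p F| = k.
Proof.
move=> k0 kn iF kF cF; have kn' : k <= n by lia.
have hits_le q : #|hits q F| <= k.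
  exact/card_pairwise_meeting/pairwise_meeting_hits.
have sum_eq : \sum_q #|hits q F| = \sum_(q : {perm 'I_n}) k.
  apply/eqP; rewrite -(eqn_pmul2l (_ : 0 < 'C(n.-1, k.-1))) ?bin_gt0; last by lia.
  by rewrite binom_sum_card_hits // cF sum_nat_const card_Sn (mulnC n`!).
have : \sum_q (k - #|hits q F|) == 0.
  by rewrite sumnB ?sum_eq ?subnn.
rewrite sum_nat_eq0 => /forallP /(_ p) /=; rewrite subn_eq0 => ge.
by apply/anti_leq; rewrite ge hits_le.
Qed.

Lemma EKR_extremal_exchange_closed F : 1 < k -> k + k < n ->
  intersecting F -> uniform k F -> #|F| = 'C(n.-1, k.-1) -> exchange_closed F.
Proof.
move=> k1 kn iF kF cF; have n0 : 0 < n by lia.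
have kn' : 0 < k < n by lia.
have kn'' : k <= n by lia.
have kpk : k.-1 < k by lia.
pose s : 'I_n := Ordinal n0.
have [t1 st1] : exists t, cdist s t = 1 by apply: exists_cdist; lia.
have [tm stm] : exists t, cdist s t = n.-1 by apply: exists_cdist; lia.
have [e1 se1] : exists t, cdist s t = k.-1 by apply: exists_cdist; lia.
have [e2 se2] : exists t, cdist s t = k by apply: exists_cdist; lia.
have [sX e1X e2X tmX] :
    [/\ s \in arc k s, e1 \in arc k s, e2 \notin arc k s & tm \notin arc k s].
  by rewrite !inE cdistnn se1 se2 stm; split; lia.
have [se1' e2tm] : s != e1 /\ e2 != tm.
  by rewrite -!(inj_eq (@cdist_inj _ s)) cdistnn se1 se2 stm; split; lia.
move=> A x1 x2 y1 y2 AF x1A x2A x12 y1A y2A y12.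
(* Relabel so that the arc at s becomes A, its ends s, e1 go to x1, x2 and the
   points e2, tm just outside it go to y1, y2: the arcs at the neighbours t1, tm
   of s then become the two exchanges, and one of them must be hit. *)
have [p [pX ps pe1 pe2 ptm]] :
    exists p, [/\ p @: arc k s = A, p s = x1, p e1 = x2, p e2 = y1 & p tm = y2].
  by apply: exists_perm_imset_at; rewrite // (kF A AF) card_arc.
have cT : #|hits p F| = k by apply: EKR_extremal_card_hits; rewrite // ltnW.
have sT : s \in hits p F by rewrite inE pX.
have [t1T | t1T] := boolP (t1 \in hits p F).
  by left; move: t1T; rewrite inE (arc_succ kn' st1 se2) perm_imset_exchange pX ps pe2.
have [tmT | tmT] := boolP (tm \in hits p F).
  by right; move: tmT; rewrite inE (arc_pred kn' stm se1) perm_imset_exchange pX pe1 ptm.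
suff : #|hits p F| <= k.-1 by rewrite cT leqNgt kpk.
apply: (card_pairwise_meeting_gap k1 kn (pairwise_meeting_hits (p := p) iF) sT) => t tT.
rewrite !inE negb_or -st1 -stm !(inj_eq (@cdist_inj _ s)).
by apply/andP; split; [move: t1T | move: tmT]; apply: contraNneq => <-.
Qed.

End KatonaCycle.

Section Stars.
Variable T : finType.
Implicit Types (A B D : {set T}) (x y : T).

Lemma card_setC_setU A B : #|~: (A :|: B)| + #|A| + #|B| = #|T| + #|A :&: B|.
Proof. by have := cardsC (A :|: B); have := cardsUI A B; lia. Qed.

Lemma exchange_setI A B x y : y \notin B -> (y |: A :\ x) :&: B = (A :&: B) :\ x.
Proof.
move=> yB; apply/setP => z; rewrite !inE.
case: (z =P y) => [-> | _] /=; last by rewrite andbA.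
by rewrite (negbTE yB) !andbF.
Qed.

Lemma set1D1 x y : y != x -> [set x] :\ y = [set x].
Proof. by move=> yx; apply/setDidPl; rewrite disjoints1 inE eq_sym. Qed.

Variables (k : nat) (F : {set {set T}}).
Hypotheses (iF : intersecting F) (kF : uniform k F) (xF : exchange_closed F).
Hypothesis kT : k + k < #|T|.

Lemma card_setI_lt_setC_setU A B : A \in F -> B \in F -> #|A :&: B| < #|~: (A :|: B)|.
Proof. by move=> AF BF; have := card_setC_setU A B; rewrite (kF AF) (kF BF); lia. Qed.

Lemma card_outside_single_meet A B x : A \in F -> B \in F -> A :&: B = [set x] ->
  1 < #|~: (A :|: B)|.
Proof. by move=> AF BF ABx; have := card_setI_lt_setC_setU AF BF; rewrite ABx cards1. Qed.

Lemma exchange_single_meet A B x a y : A \in F -> B \in F -> A :&: B = [set x] ->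
  a \in A -> a != x -> y \notin A -> y |: A :\ a \in F.
Proof.
move=> AF BF ABx aA ax yA.
have [xA xB] : x \in A /\ x \in B by apply/andP; rewrite -in_setI ABx set11.
have [y' y'AB y'y] : exists2 y', y' \notin A :|: B & y' != y.
  case/card_gt1P: (card_outside_single_meet AF BF ABx) => y1 [y2 [+ + y12]].
  rewrite !in_setC => y1AB y2AB.
  have [y1y | y1y] := eqVneq y1 y; last by exists y1.
  by exists y2; rewrite // -y1y eq_sym.
move: y'AB; rewrite in_setU negb_or => /andP [y'A y'B].
have xa : x != a by rewrite eq_sym.
have [y'F | //] := xF AF xA aA xa y'A yA y'y.
have := iF y'F BF; rewrite -setI_eq0 exchange_setI // ABx.
by rewrite setDv eqxx.
Qed.

Lemma single_meet_mem A B x D : A \in F -> B \in F -> A :&: B = [set x] ->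
  x \in D -> #|D| = k -> D \in F.
Proof.
(* Move A towards D one exchange at a time, keeping a pair meeting exactly in
   x; when the new point of A lies in B, B is first moved off it. *)
move: {2}#|D :\: A| (erefl #|D :\: A|) => m.
elim: m A B => [|m IHm] A B dDA AF BF ABx xD cD.
  suff -> : D = A by [].
  by apply/eqP; rewrite eqEcard cD (kF AF) leqnn andbT -setD_eq0 -cards_eq0 dDA.
have [xA xB] : x \in A /\ x \in B by apply/andP; rewrite -in_setI ABx set11.
have [y] : exists y, y \in D :\: A by apply/card_gt0P; rewrite dDA.
rewrite inE => /andP [yA yD].
have [a] : exists a, a \in A :\: D.
  by apply/card_gt0P; rewrite cardsD setIC (kF AF) -cD -cardsD dDA.
rewrite inE => /andP [aD aA].
have ax : a != x by apply: contraNneq aD => ->.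
have A'F := exchange_single_meet AF BF ABx aA ax yA.
have dDA' : #|D :\: (y |: A :\ a)| = m.
  suff -> : D :\: (y |: A :\ a) = (D :\: A) :\ y.
    by apply/eqP; rewrite -eqSS -dDA (cardsD1 y (D :\: A)) !inE yA yD.
  apply/setP => z; rewrite !inE; case: (z =P y) => [-> | _] //=.
  by case: (z =P a) => [-> | _]; rewrite ?(negbTE aD) ?andbF.
have [yB | yB] := boolP (y \in B); last first.
  by apply: (IHm _ B dDA' A'F BF) => //; rewrite exchange_setI // ABx set1D1.
have [z] : exists z, z \in ~: (A :|: B).
  by apply/card_gt0P/ltnW/(card_outside_single_meet AF BF ABx).
rewrite !inE negb_or => /andP [zA zB].
have yx : y != x by apply: contraNneq yA => ->.
have BAx : B :&: A = [set x] by rewrite setIC.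
have B'F := exchange_single_meet BF AF BAx yB yx zB.
have yB' : y \notin z |: B :\ y.
  by rewrite !inE eqxx /= orbF; apply: contraNneq zB => <-.
apply: (IHm _ _ dDA' A'F B'F) => //.
by rewrite exchange_setI // [A :&: _]setIC exchange_setI // BAx !set1D1.
Qed.

Lemma exists_single_meet A0 : A0 \in F ->
  exists A B x, [/\ A \in F, B \in F & A :&: B = [set x]].
Proof.
move=> A0F.
(* A pair with smallest intersection: two common points would allow an
   exchange that shrinks it. *)
case: (@arg_minnP _ (A0, A0) (fun P => (P.1 \in F) && (P.2 \in F))
  (fun P => #|P.1 :&: P.2|)) => [|[A B] /= /andP [AF BF] minAB].
  by rewrite /= A0F.
have [x xAB] : exists x, x \in A :&: B by apply/set0Pn; rewrite setI_eq0 iF.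
exists A, B, x; split => //; apply/eqP; rewrite eqEsubset sub1set xAB andbT.
apply/subsetP => z zAB; rewrite inE; apply/negPn/negP => zx.
have [xA xB] : x \in A /\ x \in B by apply/andP; rewrite -in_setI.
have [zA zB] : z \in A /\ z \in B by apply/andP; rewrite -in_setI.
have shrink y t : t \in A -> t \in B -> y \notin B -> y |: A :\ t \in F -> False.
  move=> tA tB yB A'F; have := minAB (y |: A :\ t, B); rewrite /= A'F BF => /(_ isT).
  by rewrite exchange_setI // leqNgt proper_card // properD1 // inE tA tB.
have two_in : 1 < #|A :&: B| by apply/card_gt1P; exists z, x; rewrite zAB xAB.
case/card_gt1P: (ltn_trans two_in (card_setI_lt_setC_setU AF BF)) => y1 [y2 [+ + y12]].
rewrite !in_setC !in_setU !negb_or => /andP [y1A y1B] /andP [y2A y2B].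
have xz : x != z by rewrite eq_sym.
by have [/shrink | /shrink] := xF AF xA zA xz y1A y2A y12; apply.
Qed.

Lemma exchange_closed_star A0 : A0 \in F ->
  exists x, forall D, #|D| = k -> (D \in F) = (x \in D).
Proof.
move=> /exists_single_meet [A [B [x [AF BF ABx]]]].
have memF D : x \in D -> #|D| = k -> D \in F := single_meet_mem AF BF ABx.
have k0 : 0 < k.
  rewrite -(kF AF); apply/card_gt0P; exists x.
  by move: (set11 x); rewrite -ABx inE => /andP [].
exists x => D cD; apply/idP/idP => [DF | xD]; last exact: memF.
apply/negPn/negP => xD.
have : k.-1 <= #|~: (x |: D)|.
  by have := cardsC (x |: D); rewrite cardsU1 xD cD; lia.
rewrite -(bin_gt0 _ k.-1) -cards_draws => /card_gt0P [S].
rewrite inE => /andP [SxD /eqP cS].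
have xS : x \notin S by apply/negP => /(subsetP SxD); rewrite !inE eqxx.
have xSF : x |: S \in F by apply: memF; rewrite ?setU11 // cardsU1 xS cS add1n prednK.
have := iF xSF DF; rewrite disjoints_subset subUset sub1set !inE xD /=.
by rewrite (subset_trans SxD) // setCS subsetUr.
Qed.

End Stars.

Section OddIndependence.
Variables (V : finType) (adj : rel V).

Lemma odd_independent_set0 : odd_independent adj set0.
Proof.
apply/andP; split; first by apply/forallP => x; rewrite inE.
apply/forallP => v; apply/implyP => _; apply/orP; left.
by rewrite cards_eq0; apply/eqP/setP => u; rewrite !inE.
Qed.

Lemma alpha_od_leq_alpha : alpha_od adj <= alpha adj.
Proof. by apply/bigmax_leqP => S /andP [indS _]; apply: leq_bigmax_cond. Qed.

Lemma alpha_od_attained : exists2 S, odd_independent adj S & #|S| = alpha_od adj.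
Proof.
rewrite /alpha_od (bigmax_eq_arg set0) ?odd_independent_set0 //.
by case: arg_maxnP => [|S oddS _]; [exact: odd_independent_set0 | exists S].
Qed.

End OddIndependence.

Lemma card_draws_setU1 (T : finType) (c : T) (R : {set T}) m : c \notin R ->
  #|[set B : {set T} | [&& c \in B, B \subset c |: R & #|B| == m.+1]]| = 'C(#|R|, m).
Proof.
move=> cR; have cS (S : {set T}) : S \subset R -> c \notin S.
  by move=> SR; apply: contra cR => /(subsetP SR).
rewrite -cards_draws -[RHS](@card_in_imset _ _ (fun S => c |: S)); last first.
  move=> S1 S2; rewrite !inE => /andP [S1R _] /andP [S2R _] e.
  by rewrite -(setU1K (cS _ S1R)) -(setU1K (cS _ S2R)) e.
apply: eq_card => B; rewrite [in LHS]inE.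
apply/idP/imsetP => [/and3P [cB BcR /eqP cardB] | [S]].
  exists (B :\ c); last by rewrite setD1K.
  rewrite inE; apply/andP; split.
    apply/subsetP => z; rewrite inE => /andP [zc zB].
    by move: (subsetP BcR z zB); rewrite inE (negbTE zc).
  by move: (cardsD1 c B); rewrite cB cardB add1n => -[<-].
rewrite inE => /andP [SR /eqP cardS] ->.
by rewrite setU11 setUS //= cardsU1 (cS _ SR) cardS add1n.
Qed.

Section Kneser.
Variables n k : nat.
Implicit Types (S : {set KGV n k}) (c : 'I_n).

Definition family_of S : {set {set 'I_n}} := [set val A | A in S].

Lemma card_family_of S : #|family_of S| = #|S|.
Proof. by rewrite card_imset //; apply: val_inj. Qed.

Lemma uniform_family_of S : uniform k (family_of S).
Proof. by move=> _ /imsetP [A _ ->]; apply/eqP; apply: (valP A). Qed.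

Lemma intersecting_family_of S : independent (@KGadj n k) S -> intersecting (family_of S).
Proof.
move=> /forallP indS _ _ /imsetP [A AS ->] /imsetP [B BS ->].
by move: (indS A); rewrite AS => /forallP /(_ B); rewrite BS.
Qed.

Lemma independent_card_leq S : 0 < k -> k + k <= n -> independent (@KGadj n k) S ->
  #|S| <= 'C(n.-1, k.-1).
Proof.
move=> k0 kn indS; rewrite -card_family_of.
exact: EKR k0 kn (intersecting_family_of indS) (@uniform_family_of S).
Qed.

Definition star c : {set KGV n k} := [set A : KGV n k | c \in val A].

Lemma star_independent c : independent (@KGadj n k) (star c).
Proof.
apply/forallP => A; apply/implyP; rewrite inE => cA.
apply/forallP => B; apply/implyP; rewrite inE => cB.
by apply/negP => /pred0P /(_ c); rewrite /= cA cB.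
Qed.

Lemma card_KGV (P : pred {set 'I_n}) :
  #|[set A : KGV n k | P (val A)]| = #|[set B : {set 'I_n} | (#|B| == k) && P B]|.
Proof.
rewrite -(card_imset _ val_inj); apply: eq_card => B; rewrite inE.
apply/imsetP/andP => [[A] | [cB PB]]; first by rewrite inE => PA ->; rewrite (valP A).
by exists (exist _ B cB); rewrite ?inE.
Qed.

Lemma card_star c : 0 < k -> #|star c| = 'C(n.-1, k.-1).
Proof.
move=> k0; rewrite (card_KGV (fun B => c \in B)).
have cR : c \notin [set~ c] by rewrite !inE eqxx.
have cardR : #|[set~ c]| = n.-1 by rewrite cardsC1 card_ord.
rewrite -cardR -(card_draws_setU1 _ cR) prednK //.
apply: eq_card => B; rewrite !inE andbC; congr (_ && _).
by rewrite setUCr subsetT.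
Qed.

Lemma card_star_neighbours c (v : KGV n k) : 0 < k -> k < n -> c \notin val v ->
  #|[set u in star c | KGadj v u]| = 'C(n - k - 1, k.-1).
Proof.
move=> k0 kn cv.
have cR : c \notin ~: (c |: val v) by rewrite !inE eqxx.
have cardR : #|~: (c |: val v)| = n - k - 1.
  by have := cardsC (c |: val v); rewrite cardsU1 cv (eqP (valP v)) card_ord; lia.
have cRv : c |: ~: (c |: val v) = ~: val v.
  by apply/setP => z; rewrite !inE; case: (z =P c) => [-> | _].
transitivity #|[set A : KGV n k | (c \in val A) && [disjoint val v & val A]]|.
  by apply: eq_card => u; rewrite !inE.
rewrite (card_KGV (fun B => (c \in B) && [disjoint val v & B])).
rewrite -cardR -(card_draws_setU1 _ cR) prednK //.
apply: eq_card => B; rewrite !inE cRv disjoint_sym disjoints_subset.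
by rewrite andbC -andbA.
Qed.

Lemma exists_vertex_avoiding c : k < n -> exists v : KGV n k, c \notin val v.
Proof.
move=> kn; have : 0 < #|[set B : {set 'I_n} | B \subset [set~ c] & #|B| == k]|.
  by rewrite cards_draws bin_gt0 cardsC1 card_ord -ltnS prednK // (leq_ltn_trans _ kn).
case/card_gt0P => B; rewrite inE => /andP [Bc cB].
by exists (exist _ B cB); apply/negP => /(subsetP Bc); rewrite !inE eqxx.
Qed.

Lemma alpha_KG : 0 < k -> k + k <= n -> alpha (@KGadj n k) = 'C(n.-1, k.-1).
Proof.
move=> k0 kn; have n0 : 0 < n by lia.
apply/eqP; rewrite eqn_leq; apply/andP; split.
  by apply/bigmax_leqP => S; apply: independent_card_leq.
apply: (bigmax_sup (star (Ordinal n0))); first exact: star_independent.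
by rewrite card_star.
Qed.

Lemma independent_extremal_star S : 1 < k -> k + k < n ->
  independent (@KGadj n k) S -> #|S| = 'C(n.-1, k.-1) -> exists c, S = star c.
Proof.
move=> k1 kn indS cS.
have iF := intersecting_family_of indS; have kF := @uniform_family_of S.
have cF : #|family_of S| = 'C(n.-1, k.-1) by rewrite card_family_of.
have xF := EKR_extremal_exchange_closed k1 kn iF kF cF.
have [A0 A0F] : exists A0, A0 \in family_of S.
  by apply/card_gt0P; rewrite cF bin_gt0; lia.
have kT : k + k < #|'I_n| by rewrite card_ord.
have [c starF] := exchange_closed_star iF kF xF kT A0F.
exists c; apply/setP => A; rewrite inE -(starF _ (eqP (valP A))).
by rewrite mem_imset //; apply: val_inj.
Qed.

Lemma odd_independent_star c : 0 < k -> k + k <= n ->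
  odd_independent (@KGadj n k) (star c) = odd 'C(n - k - 1, k.-1).
Proof.
move=> k0 kn; have kn' : k < n by lia.
rewrite /odd_independent star_independent /=.
have nbr v : v \in ~: star c -> #|[set u in star c | KGadj v u]| = 'C(n - k - 1, k.-1).
  by rewrite !inE => cv; apply: card_star_neighbours => //; lia.
have nbr_gt0 : 0 < 'C(n - k - 1, k.-1) by rewrite bin_gt0; lia.
apply/forallP/idP => [odd_nbr | odd_b v].
  have [v cv] := exists_vertex_avoiding c kn'.
  have vS : v \in ~: star c by rewrite !inE.
  by move: (odd_nbr v); rewrite vS nbr // eqn0Ngt nbr_gt0.
by apply/implyP => vS; rewrite nbr // odd_b orbT.
Qed.

End Kneser.

Lemma Vandermonde_mod2 n k : 0 < k < n ->
  ('C(n - 1, k - 1) != \sum_(1 <= t < k) 'C(k, t) * 'C(n - k - 1, k - 1 - t)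
                        %[mod 2]) = odd 'C(n - k - 1, k - 1).
Proof.
case: k => // k /= kn.
have := Vandermonde k.+1 (n - k.+1 - 1) k.
rewrite -(big_mkord xpredT (fun j => 'C(k.+1, j) * 'C(n - k.+1 - 1, k - j))).
rewrite big_ltn // bin0 mul1n subn0.
have -> : k.+1 + (n - k.+1 - 1) = n - 1 by lia.
rewrite subSS subn0 => <-; rewrite !modn2 oddD.
by case: (odd _); case: (odd _).
Qed.

Theorem theorem2 (n k : nat) (hk : 2 <= k) (hn : 2 * k <= n) :
  (alpha_od (@KGadj n k) = alpha (@KGadj n k) <-> odd 'C(n - k - 1, k - 1))
  /\
  (alpha_od (@KGadj n k) = alpha (@KGadj n k) <->
     'C(n - 1, k - 1) != \sum_(1 <= t < k) 'C(k, t) * 'C(n - k - 1, k - 1 - t)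
                         %[mod 2]).
Proof.
have k0 : 0 < k by lia.
have kn : k + k <= n by lia.
have n0 : 0 < n by lia.
have alphaE := alpha_KG k0 kn.
suff iff_odd : alpha_od (@KGadj n k) = alpha (@KGadj n k) <-> odd 'C(n - k - 1, k.-1).
  by rewrite -subn1 in iff_odd; split => //; rewrite Vandermonde_mod2 //; lia.
split => [alpha_eq | odd_b].
  have [n2k | n2k] := eqVneq n (k + k); first by rewrite n2k addKn subn1 binn.
  have [S oddS cS] := alpha_od_attained (@KGadj n k).
  rewrite alpha_eq alphaE in cS.
  have kn' : k + k < n by rewrite ltn_neqAle eq_sym n2k kn.
  have [c Sc] := independent_extremal_star hk kn' (andP oddS).1 cS.
  by rewrite -(odd_independent_star c k0 kn) -Sc.
apply/eqP; rewrite eqn_leq alpha_od_leq_alpha alphaE -(card_star (Ordinal n0) k0).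
by apply: leq_bigmax_cond; rewrite odd_independent_star.
Qed.
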